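(* For each integer $r\ge3$, with $n=2^r+3$, the codewords $|\bar0\rangle=\tfrac{1}{\sqrt{2^{r+1}}}\big(\sqrt{2^r-3}\,|D^{n}_0\rangle+\sqrt{2^r+3}\,|D^{n}_{2^r}\rangle\big)$, $|\bar1\rangle=\tfrac{1}{\sqrt{2^{r+1}}}\big(\sqrt{2^r+3}\,|D^{n}_3\rangle+\sqrt{2^r-3}\,|D^{n}_{n}\rangle\big)$ span a non-additive permutationally invariant $((2^r+3,2,3))$ $n$-qubit code with transversal group $\mathsf{Q}^{(r)}$, i.e. a $((2^r+3,2,3,\mathsf{Q}^{(r)}))$ code.
   Context: $|D^n_w\rangle$ is the normalized uniform superposition of all $n$-qubit computational basis states of Hamming weight $w$. An $((n,K,d))$ code is a $K$-dimensional subspace of $n$ qubits with $\langle\phi|E|\psi\rangle=c_E\langle\phi|\psi\rangle$ for all codewords and all Pauli $E$ of weight $<d$ ($c_E$ independent of codewords). Non-additive = not a stabilizer code. Permutationally invariant: codewords invariant under all qubit permutations. With $\mathsf{X}=\begin{pmatrix}0&-i\\-i&0\end{pmatrix}$, $\mathsf{Z}=\mathrm{diag}(-i,i)$, $\mathsf{Ph}(\alpha)=\mathrm{diag}(e^{-i\alpha/2},e^{i\alpha/2})$, the generalized quaternion group is $\mathsf{Q}^{(r)}=\mathsf{BD}_{2^r}=\langle\mathsf{X},\mathsf{Z},\mathsf{Ph}(2\pi/2^r)\rangle$ (order $2^{r+2}$); e.g. $\mathsf{Q}^{(3)}$ contains $\mathsf{T}=\mathsf{Ph}(\pi/4)$.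 A code with encoding isometry $V$ has transversal group $\mathsf{G}\subset\mathrm{SU}(2)$ ($\mathsf{G}$-transversal) if $g^{\otimes n}V=V\lambda(g)$ for all $g\in\mathsf{G}$, for a faithful two-dimensional irreducible representation $\lambda$ of $\mathsf{G}$. *)

From HB Require Import structures.
From mathcomp Require Import all_boot all_order all_algebra all_fingroup all_field.
Set Implicit Arguments. Unset Strict Implicit. Unset Printing Implicit Defensive.
Import Order.TTheory GRing.Theory Num.Theory.
Local Open Scope ring_scope.

Definition qbasis (n : nat) := {ffun 'I_n -> bool}.
Definition qstate (n : nat) := qbasis n -> algC.
Definition qop (n : nat) := qbasis n -> qbasis n -> algC.

Definition apply_op n (A : qop n) (psi : qstate n) : qstate n :=
  fun y => \sum_(x : qbasis n) A y x * psi x.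
Definition mul_op n (A B : qop n) : qop n :=
  fun y x => \sum_(z : qbasis n) A y z * B z x.
Definition id_op n : qop n := fun y x => (y == x)%:R.
Definition inner n (phi psi : qstate n) : algC :=
  \sum_(x : qbasis n) (phi x)^* * psi x.

Definition bitidx (b : bool) : 'I_2 := if b then ord_max else ord0.
Definition mx2 (a b c d : algC) : 'M[algC]_2 :=
  \matrix_(i < 2, j < 2)
    if val i == 0%N then (if val j == 0%N then a else b)
    else (if val j == 0%N then c else d).

Definition tensor n (u : 'I_n -> 'M[algC]_2) : qop n :=
  fun y x => \prod_(i < n) u i (bitidx (y i)) (bitidx (x i)).
Definition tpow n (g : 'M[algC]_2) : qop n := tensor (fun _ : 'I_n => g).

(* Pauli matrices, indexed by 'I_4 : 0 = I, 1 = X, 2 = Y, 3 = Z *)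
Definition sigma (k : 'I_4) : 'M[algC]_2 :=
  match val k with
  | 0 => mx2 1 0 0 1
  | 1 => mx2 0 1 1 0
  | 2 => mx2 0 (- 'i) 'i 0
  | _ => mx2 1 0 0 (-1)
  end.
Definition pauli_op n (p : 'I_n -> 'I_4) : qop n := tensor (fun i => sigma (p i)).
Definition pweight n (p : 'I_n -> 'I_4) : nat := #|[pred i | p i != ord0]|.

Definition hweight n (x : qbasis n) : nat := #|[pred i | x i]|.
Definition dicke n (w : nat) : qstate n :=
  fun x => if hweight x == w then (sqrtC ('C(n, w))%:R)^-1 else 0.

Definition comb n K (w : 'I_K -> qstate n) (a : 'I_K -> algC) : qstate n :=
  fun x => \sum_(k < K) a k * w k x.
Definition in_span n K (w : 'I_K -> qstate n) (psi : qstate n) : Prop :=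
  exists a : 'I_K -> algC, forall x, psi x = comb w a x.

Definition is_code n K (d : nat) (w : 'I_K -> qstate n) : Prop :=
  (forall j k : 'I_K, inner (w j) (w k) = (j == k)%:R) /\
  forall p : 'I_n -> 'I_4, (pweight p < d)%N ->
    exists c : algC, forall phi psi, in_span w phi -> in_span w psi ->
      inner phi (apply_op (pauli_op p) psi) = c * inner phi psi.

Definition is_pauli_elt n (A : qop n) : Prop :=
  exists (k : nat) (p : 'I_n -> 'I_4), forall y x, A y x = 'i ^+ k * pauli_op p y x.

Definition stabilizer_group n (S : qop n -> Prop) : Prop :=
  [/\ forall A, S A -> is_pauli_elt A,
      S (@id_op n),
      forall A B, S A -> S B -> S (mul_op A B),
      forall A B, S A -> S B -> forall y x, mul_op A B y x = mul_op B A y x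
    & ~ (exists A, S A /\ forall y x, A y x = - id_op y x)].

Definition is_stabilizer_code n K (w : 'I_K -> qstate n) : Prop :=
  exists S : qop n -> Prop, stabilizer_group S /\
    forall psi, in_span w psi <-> (forall A, S A -> forall y, apply_op A psi y = psi y).
Definition non_additive n K (w : 'I_K -> qstate n) : Prop := ~ is_stabilizer_code w.

Definition perm_invariant n K (w : 'I_K -> qstate n) : Prop :=
  forall psi, in_span w psi ->
    forall (s : 'S_n) (x : qbasis n), psi [ffun i => x (s i)] = psi x.

Definition Xg : 'M[algC]_2 := mx2 0 (- 'i) (- 'i) 0.
Definition Zg : 'M[algC]_2 := mx2 (- 'i) 0 0 'i.
(* (2^r).-root (-1) = e^{i pi / 2^r} (root of minimal nonnegative argument) *)
Definition Phg (r : nat) : 'M[algC]_2 :=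
  let z := (2 ^ r)%N.-root (-1) in mx2 z^-1 0 0 z.
Inductive inQ (r : nat) : 'M[algC]_2 -> Prop :=
  | inQ1 : inQ r 1
  | inQX : inQ r Xg
  | inQZ : inQ r Zg
  | inQPh : inQ r (Phg r)
  | inQmul g h : inQ r g -> inQ r h -> inQ r (g *m h).

Definition faithful_irrep2 (G : 'M[algC]_2 -> Prop) (lam : 'M[algC]_2 -> 'M[algC]_2) : Prop :=
  [/\ forall g, G g -> lam g \in unitmx,
      forall g h, G g -> G h -> lam (g *m h) = lam g *m lam h,
      forall g h, G g -> G h -> lam g = lam h -> g = h
    & forall U : 'M[algC]_2, (forall g, G g -> (U *m (lam g)^T <= U)%MS) ->
        U = 0 \/ row_full U].

(* G-transversal: g^{(x)n} V = V lam(g), V the encoding isometry with columns w k *)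
Definition G_transversal n (w : 'I_2 -> qstate n) (G : 'M[algC]_2 -> Prop) : Prop :=
  exists lam, faithful_irrep2 G lam /\
    forall g, G g -> forall (k : 'I_2) (y : qbasis n),
      apply_op (@tpow n g) (w k) y = \sum_(j < 2) lam g j k * w j y.

Definition codeword0 (r : nat) : qstate (2 ^ r + 3) :=
  fun x => (sqrtC (2 ^ r.+1)%:R)^-1 *
    (sqrtC (2 ^ r - 3)%:R * @dicke (2 ^ r + 3) 0 x
     + sqrtC (2 ^ r + 3)%:R * @dicke (2 ^ r + 3) (2 ^ r) x).
Definition codeword1 (r : nat) : qstate (2 ^ r + 3) :=
  fun x => (sqrtC (2 ^ r.+1)%:R)^-1 *
    (sqrtC (2 ^ r + 3)%:R * @dicke (2 ^ r + 3) 3 x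
     + sqrtC (2 ^ r - 3)%:R * @dicke (2 ^ r + 3) (2 ^ r + 3) x).
Definition codewords (r : nat) : 'I_2 -> qstate (2 ^ r + 3) :=
  fun k => if val k == 0%N then @codeword0 r else @codeword1 r.
Arguments codeword0 r : clear implicits.
Arguments codeword1 r : clear implicits.
Arguments codewords r : clear implicits.

(* Both codewords are functions of the Hamming weight, supported on the weights {0, 2^r} and
   {3, 2^r + 3}.  Any two of these weights are at least 3 apart, so a Pauli of weight at most 2
   has no off-diagonal matrix elements on the code, and its diagonal elements only see the
   total mass, the mean and the second factorial moment of the weight distribution of each
   codeword, which are the same for both codewords.

   A Pauli element fixing both codewords cannot flip any qubit (the flipped weight-0 and
   weight-3 strings would leave the supports), has scalar 1, and the product of its phases on
   any three qubits is 1 (it fixes the weight-3 strings).  With at least four qubits this makes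
   every phase trivial, so a stabilizer of the code would also fix the weight-one basis state,
   which is not a codeword.

   Every element of Q^(r) is diag(z^-k, z^k) or diag(z^-k, z^k) X with z = e^(i pi / 2^r).  On
   the code, its n-th tensor power acts by diag(z^-kn, z^kn), resp. by that times an
   antidiagonal logical X.  As n = 2^r + 3 is odd, hence prime to the order 2^(r+1) of z, this
   representation is faithful, and the images of Ph and X, a diagonal matrix with distinct
   eigenvalues and an antidiagonal one, leave no line invariant. *)
From HB Require Import structures.
From mathcomp Require Import all_boot all_order all_algebra all_fingroup all_field.
From mathcomp Require Import zify ring.
Set Implicit Arguments. Unset Strict Implicit. Unset Printing Implicit Defensive.
Import Order.TTheory GRing.Theory Num.Theory.
Local Open Scope ring_scope.

(** * Pauli strings *)

Lemma ffun_neqP (aT : finType) (rT : eqType) (f g : {ffun aT -> rT}) :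
  f != g -> exists i, f i != g i.
Proof.
move=> fg; apply/existsP; rewrite -negb_forall; apply: contra fg => /forallP fg.
by apply/eqP/ffunP => i; apply/eqP.
Qed.

Definition pauli_flip (k : 'I_4) : bool := (val k == 1%N) || (val k == 2%N).
Definition pauli_phase (k : 'I_4) (b : bool) : algC :=
  if val k == 2%N then (if b then - 'i else 'i)
  else if val k == 3%N then (if b then -1 else 1) else 1.

Lemma sigma_bitE k b' b :
  sigma k (bitidx b') (bitidx b) = (b' == b (+) pauli_flip k)%:R * pauli_phase k b.
Proof.
case: k => [[|[|[|[|k]]]] Hk] //; case: b'; case: b;
  rewrite /sigma /mx2 /bitidx /pauli_flip /pauli_phase !mxE /= ?mul1r ?mulr1 ?mul0r //.
Qed.

Lemma pauli_phase_false k : ~~ pauli_flip k -> pauli_phase k false = 1.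
Proof. by case: k => [[|[|[|[|k]]]] Hk]. Qed.

Lemma sqr_pauli_phase k : ~~ pauli_flip k -> pauli_phase k true ^+ 2 = 1.
Proof.
by case: k => [[|[|[|[|k]]]] Hk] //= _; rewrite /pauli_phase /= ?expr1n // sqrrN expr1n.
Qed.

Definition xorv n (a x : qbasis n) : qbasis n := [ffun l => x l (+) a l].
Definition pauli_flips n (p : 'I_n -> 'I_4) : qbasis n := [ffun l => pauli_flip (p l)].
Definition pauli_phases n (p : 'I_n -> 'I_4) (x : qbasis n) : algC :=
  \prod_l pauli_phase (p l) (x l).

Lemma xorvK n (a : qbasis n) : involutive (xorv a).
Proof. by move=> x; apply/ffunP => l; rewrite !ffunE addbK. Qed.

Lemma pauli_opE n p (y x : qbasis n) :
  pauli_op p y x = (y == xorv (pauli_flips p) x)%:R * pauli_phases p x.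
Proof.
rewrite /pauli_op /tensor /pauli_phases.
rewrite (eq_bigr (fun l => (y l == x l (+) pauli_flip (p l))%:R * pauli_phase (p l) (x l)));
  last by move=> l _; apply: sigma_bitE.
rewrite big_split /=; congr (_ * _).
have [->|/ffun_neqP[l yl]] := eqVneq y (xorv (pauli_flips p) x).
  by apply: big1 => l _; rewrite !ffunE eqxx.
by rewrite (bigD1 l) //= !ffunE in yl *; rewrite (negbTE yl) mul0r.
Qed.

Lemma apply_pauliE n p (psi : qstate n) y :
  apply_op (pauli_op p) psi y =
  pauli_phases p (xorv (pauli_flips p) y) * psi (xorv (pauli_flips p) y).
Proof.
rewrite /apply_op (bigD1 (xorv (pauli_flips p) y)) //= big1 ?addr0.
  by rewrite pauli_opE xorvK eqxx mul1r.
move=> x xy; rewrite pauli_opE; case: eqP => [E|]; last by rewrite !mul0r.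
by rewrite E xorvK eqxx in xy.
Qed.

Lemma apply_scaled_pauliE n (A : qop n) c p psi y :
  (forall y x, A y x = c * pauli_op p y x) ->
  apply_op A psi y = c * (pauli_phases p (xorv (pauli_flips p) y) * psi (xorv (pauli_flips p) y)).
Proof.
move=> AE; rewrite -apply_pauliE /apply_op mulr_sumr.
by apply: eq_bigr => x _; rewrite AE mulrA.
Qed.

Lemma inner_pauliE n p (phi psi : qstate n) :
  inner phi (apply_op (pauli_op p) psi) =
  \sum_x (phi (xorv (pauli_flips p) x))^* * pauli_phases p x * psi x.
Proof.
rewrite /inner (reindex_inj (inv_inj (xorvK (pauli_flips p)))) /=.
by apply: eq_bigr => x _; rewrite apply_pauliE xorvK mulrA.
Qed.

Lemma pauli_phases_pair n (p : 'I_n -> 'I_4) i j (x : qbasis n) : i != j ->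
  (forall l, l != i -> l != j -> p l = ord0) ->
  pauli_phases p x = pauli_phase (p i) (x i) * pauli_phase (p j) (x j).
Proof.
move=> ij pij; rewrite /pauli_phases (bigD1 i) // (bigD1 j) 1?eq_sym //=.
by rewrite big1 ?mulr1 // => l /andP[li lj]; rewrite pij.
Qed.

Lemma pauli_support_pair n (p : 'I_n -> 'I_4) : (1 < n)%N -> (pweight p < 3)%N ->
  exists i j, i != j /\ forall l, l != i -> l != j -> p l = ord0.
Proof.
move=> n1 pw; pose A := [set l | p l != ord0].
suff [i [j [ij sA]]] : exists i j, i != j /\ A \subset [set i; j].
  exists i, j; split=> // l li lj; apply/eqP.
  have : l \notin A by apply/negP => /(subsetP sA); rewrite !inE (negbTE li) (negbTE lj).
  by rewrite inE negbK.
have A2 : (#|A| <= 2)%N by rewrite -ltnS cardsE.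
pose i0 := Ordinal (ltnW n1); pose i1 := Ordinal n1.
have i01 : i0 != i1 by [].
case: (ltngtP #|A| 1) => [A0|A1|/eqP/cards1P[a ->]].
- by exists i0, i1; rewrite (cards0_eq (_ : #|A| = 0%N)) ?sub0set //; lia.
- have /cards2P[a [b [ab ->]]] : #|A| == 2%N by rewrite eqn_leq A2 A1.
  by exists a, b.
- have [->|ai] := eqVneq a i0; first by exists i0, i1; rewrite sub1set !inE eqxx.
  by exists a, i0; rewrite sub1set !inE eqxx.
Qed.

(** * Counting bit strings by weight *)

Lemma card_supersets_of_size (T : finType) (C : {set T}) t :
  #|[set A : {set T} | C \subset A & #|A| == t]| =
  if (#|C| <= t)%N then 'C(#|T| - #|C|, t - #|C|) else 0%N.
Proof.
case: leqP => Ct; last first.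
  apply: eq_card0 => A; rewrite inE; apply/negP => /andP[sCA /eqP At].
  by move: (subset_leq_card sCA); rewrite At leqNgt Ct.
have -> : [set A : {set T} | C \subset A & #|A| == t] =
   (fun B => C :|: B) @: [set B : {set T} | B \subset ~: C & #|B| == (t - #|C|)%N].
  apply/setP => A; rewrite inE; apply/andP/imsetP.
  - case=> sCA /eqP At; exists (A :\: C).
      by rewrite inE subDset setUCr subsetT cardsDS // At /=.
    by apply/setP => x; rewrite !inE; case xC: (x \in C); rewrite //= (subsetP sCA).
  - case=> B; rewrite inE => /andP[sBC /eqP Bt] ->; split; first exact: subsetUl.
    rewrite cardsU (_ : C :&: B = set0) ?cards0 ?Bt; first by apply/eqP; lia.
    by apply/setP => x; rewrite !inE; apply/andP => -[xC /(subsetP sBC)]; rewrite inE xC.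
rewrite card_in_imset ?cards_draws; first by congr 'C(_, _); move: (cardsC C); lia.
move=> B1 B2; rewrite !inE => /andP[s1 _] /andP[s2 _] /setP E.
apply/setP => x; move: (E x); rewrite !inE; case xC: (x \in C) => //= _.
have n1 : x \notin B1 by apply/negP => /(subsetP s1); rewrite inE xC.
have n2 : x \notin B2 by apply/negP => /(subsetP s2); rewrite inE xC.
by rewrite (negbTE n1) (negbTE n2).
Qed.

Lemma hweightE n (x : qbasis n) : hweight x = #|[set l | x l]|.
Proof. by apply: eq_card => l; rewrite !inE. Qed.


Lemma hweight_le n (y : qbasis n) : (hweight y <= n)%N.
Proof. by rewrite /hweight -[X in (_ <= X)%N]card_ord max_card. Qed.

Lemma hweightC n (y : qbasis n) : (hweight y + #|[pred i | ~~ y i]|)%N = n.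
Proof. by rewrite /hweight -[n in RHS]card_ord -(cardC [pred i | y i]). Qed.

Lemma hweight_pair n (x : qbasis n) i j : i != j ->
  hweight x = (x i + x j + #|[pred l | x l && (l != i) && (l != j)]|)%N.
Proof.
move=> ij; rewrite /hweight (cardD1 i) (cardD1 j) !inE (eq_sym j) ij /= addnA.
congr (_ + _)%N; apply: eq_card => l; rewrite !inE.
by case: (x l) (l != i) (l != j) => [] [] [].
Qed.

Lemma hweight_agree n (x y : qbasis n) i j : i != j ->
  (forall l, l != i -> l != j -> y l = x l) ->
  (hweight y + x i + x j = hweight x + y i + y j)%N.
Proof.
move=> ij yx; rewrite (hweight_pair y ij) (hweight_pair x ij).
suff -> : #|[pred l | y l && (l != i) && (l != j)]| = #|[pred l | x l && (l != i) && (l != j)]|.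
  by lia.
apply: eq_card => l; rewrite !inE.
by have [li|li] := eqVneq l i; have [lj|lj] := eqVneq l j; rewrite ?andbF // yx.
Qed.

Lemma hweight_perm n (s : 'S_n) (x : qbasis n) : hweight [ffun i => x (s i)] = hweight x.
Proof.
rewrite !hweightE -(card_preimset [set l | x l] (@perm_inj _ s)).
by apply: eq_card => l; rewrite !inE ffunE.
Qed.

Definition indicator n (B : {set 'I_n}) : qbasis n := [ffun l => l \in B].

Lemma hweight_indicator n (B : {set 'I_n}) : hweight (indicator B) = #|B|.
Proof. by apply: eq_card => l; rewrite !inE ffunE. Qed.

Lemma sum_indicator (T : finType) (P : pred T) : \sum_(i : T) ((P i)%:R : algC) = #|P|%:R.
Proof.
rewrite -sum1_card natr_sum [RHS]big_mkcond /=; apply: eq_bigr => i _.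
by case Pi: (i \in P); move: Pi; rewrite unfold_in => ->.
Qed.

Lemma sum_qbasis_support n (F : {set 'I_n} -> algC) :
  \sum_(x : qbasis n) F [set l | x l] = \sum_(A : {set 'I_n}) F A.
Proof.
rewrite (reindex (fun A : {set 'I_n} => [ffun l => l \in A])) /=.
  by apply: eq_bigr => A _; congr F; apply/setP => l; rewrite !inE ffunE.
exists (fun x : qbasis n => [set l | x l]) => [A _|x _].
  by apply/setP => l; rewrite !inE ffunE.
by apply/ffunP => l; rewrite ffunE inE.
Qed.

Lemma sum_weight_supersets n (C : {set 'I_n}) t :
  \sum_(x : qbasis n) ((hweight x == t) && (C \subset [set l | x l]))%:R =
  #|[set A : {set 'I_n} | C \subset A & #|A| == t]|%:R :> algC.
Proof.
rewrite -sum_indicator -(sum_qbasis_support (fun A => (A \in [set A0 : {set 'I_n} | C \subset A0 & #|A0| == t])%:R)).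
by apply: eq_bigr => x _; rewrite hweightE andbC inE.
Qed.

Lemma card_weight_supersets1 n (i : 'I_n) t :
  (n * #|[set A : {set 'I_n} | [set i] \subset A & #|A| == t]| = t * 'C(n, t))%N.
Proof.
rewrite card_supersets_of_size cards1 card_ord; case: t => [|t] /=; first by rewrite muln0.
by rewrite subn1 subSS subn0 mul_bin_diag.
Qed.

Lemma card_weight_supersets2 n (i j : 'I_n) t : i != j ->
  (n * n.-1 * #|[set A : {set 'I_n} | [set i; j] \subset A & #|A| == t]| = t * t.-1 * 'C(n, t))%N.
Proof.
move=> ij; rewrite card_supersets_of_size cards2 ij card_ord.
case: t => [|[|t]] /=; try by rewrite !muln0.
have -> : (n - 2 = n.-1.-1)%N by lia.
have -> : (t.+2 - 2 = t)%N by lia.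
by rewrite -mulnA mul_bin_diag mulnCA mul_bin_diag; lia.
Qed.

Lemma natr_eq_div (a b c : nat) : (a * b = c)%N -> a != 0%N -> b%:R = c%:R / a%:R :> algC.
Proof. by move=> <- a0; rewrite natrM [_ * b%:R]mulrC mulfK // pnatr_eq0. Qed.

(* The mean of [G (x i) (x j)], [i != j], over the strings [x] of weight [t]. *)
Definition pair_mean n t (G : bool -> bool -> algC) : algC :=
  G false false + (G true false + G false true - 2 * G false false) * t%:R / n%:R
  + (G true true - G true false - G false true + G false false)
      * (t * t.-1)%:R / (n * n.-1)%:R.

Lemma sum_weight_pair n (i j : 'I_n) t (G : bool -> bool -> algC) : i != j ->
  \sum_(x : qbasis n) (hweight x == t)%:R * G (x i) (x j) = 'C(n, t)%:R * pair_mean n t G.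
Proof.
move=> ij; have n1 : (1 < n)%N by case: n i j ij => [[]|[|n]] // i j; rewrite !ord1.
pose N (C : {set 'I_n}) : algC :=
  \sum_(x : qbasis n) ((hweight x == t) && (C \subset [set l | x l]))%:R.
transitivity (G false false * N set0 + (G true false - G false false) * N [set i]
   + (G false true - G false false) * N [set j]
   + (G true true - G true false - G false true + G false false) * N [set i; j]).
  rewrite /N !mulr_sumr -!big_split /=; apply: eq_bigr => x _.
  rewrite sub0set subUset !sub1set !inE.
  by case: (hweight x == t); case: (x i); case: (x j) => /=; ring.
have n0 : n != 0%N by lia.
have nn1 : (n * n.-1 != 0)%N by lia.
rewrite /N !sum_weight_supersets (natr_eq_div (card_weight_supersets1 i t) n0).
rewrite (natr_eq_div (card_weight_supersets1 j t) n0).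
rewrite (natr_eq_div (card_weight_supersets2 t ij) nn1).
by rewrite card_supersets_of_size cards0 card_ord !subn0 /pair_mean !natrM; ring.
Qed.

(** * The codewords as functions of the Hamming weight *)

Definition dicke_amp n w t : algC := if t == w then (sqrtC 'C(n, w)%:R)^-1 else 0.

Definition dicke_pair n (s a b w1 w2 : nat) (t : nat) : algC :=
  (sqrtC s%:R)^-1 * (sqrtC a%:R * dicke_amp n w1 t + sqrtC b%:R * dicke_amp n w2 t).

Section DickePair.

Variables (n s a b w1 w2 : nat).
Hypothesis w12 : w1 != w2.

Lemma dicke_pair_ge0 t : 0 <= dicke_pair n s a b w1 w2 t.
Proof.
rewrite /dicke_pair /dicke_amp; apply: mulr_ge0; rewrite ?invr_ge0 ?sqrtC_ge0 ?ler0n //.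
by apply: addr_ge0; apply: mulr_ge0; rewrite ?sqrtC_ge0 ?ler0n //; case: ifP;
  rewrite ?invr_ge0 ?sqrtC_ge0 ?ler0n.
Qed.

Lemma dicke_pair_eq0 t : t != w1 -> t != w2 -> dicke_pair n s a b w1 w2 t = 0.
Proof.
by rewrite /dicke_pair /dicke_amp => /negbTE-> /negbTE->; rewrite !mulr0 addr0 mulr0.
Qed.

Lemma dicke_pair_neq0 t : (0 < s)%N -> (w1 <= n)%N -> (w2 <= n)%N ->
  (t == w1) && (0 < a)%N || (t == w2) && (0 < b)%N -> dicke_pair n s a b w1 w2 t != 0.
Proof.
move=> s0 w1n w2n; have sq0 N : (0 < N)%N -> sqrtC N%:R != 0 :> algC.
  by move=> N0; rewrite sqrtC_eq0 pnatr_eq0 -lt0n.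
rewrite /dicke_pair /dicke_amp => /orP[]/andP[/eqP-> N0].
  rewrite eqxx (negbTE w12) mulr0 addr0.
  by rewrite !mulf_neq0 ?invr_eq0 ?sq0 ?bin_gt0.
rewrite eqxx (eq_sym w2 w1) (negbTE w12) mulr0 add0r.
by rewrite !mulf_neq0 ?invr_eq0 ?sq0 ?bin_gt0.
Qed.

Lemma sqr_dicke_pair t : dicke_pair n s a b w1 w2 t ^+ 2 =
  a%:R / s%:R / 'C(n, w1)%:R * (t == w1)%:R + b%:R / s%:R / 'C(n, w2)%:R * (t == w2)%:R.
Proof.
have sqE (u v d : algC) : (u^-1 * (v * d^-1)) ^+ 2 = v ^+ 2 / u ^+ 2 / d ^+ 2.
  by rewrite !exprMn !exprVn mulrCA mulrA.
rewrite /dicke_pair /dicke_amp; have [->|t1] := eqVneq t w1.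
  by rewrite (negbTE w12) !(mulr0, addr0, mulr1) sqE !sqrtCK.
have [_|t2] := eqVneq t w2; last by rewrite !(mulr0, addr0) expr2 mulr0.
by rewrite !(mulr0, add0r, addr0, mulr1) sqE !sqrtCK.
Qed.

Lemma sum_sqr_dicke_pair (i j : 'I_n) (G : bool -> bool -> algC) : i != j ->
  (w1 <= n)%N -> (w2 <= n)%N ->
  \sum_(x : qbasis n) dicke_pair n s a b w1 w2 (hweight x) ^+ 2 * G (x i) (x j) =
  a%:R / s%:R * pair_mean n w1 G + b%:R / s%:R * pair_mean n w2 G.
Proof.
move=> ij w1n w2n; have C0 w : (w <= n)%N -> 'C(n, w)%:R != 0 :> algC.
  by move=> wn; rewrite pnatr_eq0 -lt0n bin_gt0.
under eq_bigr do rewrite sqr_dicke_pair mulrDl -!mulrA.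
rewrite big_split /= -!mulr_sumr !sum_weight_pair // !mulrA.
by rewrite !divfK ?C0.
Qed.

End DickePair.

Definition profile r (k : 'I_2) : nat -> algC :=
  if val k == 0%N then dicke_pair (2 ^ r + 3) (2 ^ r.+1) (2 ^ r - 3) (2 ^ r + 3) 0 (2 ^ r)
  else dicke_pair (2 ^ r + 3) (2 ^ r.+1) (2 ^ r + 3) (2 ^ r - 3) 3 (2 ^ r + 3).

Lemma codewordsE r k x : codewords r k x = profile r k (hweight x).
Proof. by rewrite /codewords /profile; case: ifP. Qed.

Definition profile_support r (k : 'I_2) (t : nat) : bool :=
  if val k == 0%N then (t == 0%N) || (t == 2 ^ r)%N else (t == 3%N) || (t == 2 ^ r + 3)%N.

Lemma exp2_ge8 r : (3 <= r)%N -> (8 <= 2 ^ r)%N.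
Proof. by move=> r3; rewrite -[8%N]/(2 ^ 3)%N leq_pexp2l. Qed.

Section Profile.

Variable r : nat.
Hypothesis r3 : (3 <= r)%N.

Lemma profile_ge0 k t : 0 <= profile r k t.
Proof.
by rewrite /profile; case: ifP => _; apply: dicke_pair_ge0; rewrite ?expn_eq0 //;
  have := exp2_ge8 r3; lia.
Qed.

Lemma profile_conj k t : (profile r k t)^* = profile r k t.
Proof. exact/geC0_conj/profile_ge0. Qed.

Lemma profile_eq0 k t : ~~ profile_support r k t -> profile r k t = 0.
Proof.
rewrite /profile_support /profile; case: ifP => _;
  by rewrite negb_or => /andP[t1 t2]; apply: dicke_pair_eq0.
Qed.

Lemma profile_neq0 k t : profile_support r k t -> profile r k t != 0.
Proof.
have h8 := exp2_ge8 r3; rewrite /profile_support /profile.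
by case: ifP => _ /orP[] /eqP->; apply: dicke_pair_neq0; rewrite ?eqxx ?expn_gt0 //=; lia.
Qed.

Lemma profile_support_sep j k s t : profile_support r j s -> profile_support r k t ->
  (s <= t + 2)%N -> (t <= s + 2)%N -> j = k /\ s = t.
Proof.
have h8 := exp2_ge8 r3; rewrite /profile_support.
case: j => [[|[|//]] ?]; case: k => [[|[|//]] ?] /= /orP[]/eqP-> /orP[]/eqP-> st ts;
  by split; [apply: val_inj | ]; rewrite /=; lia.
Qed.

Lemma profile_mul j k t : profile r j t * profile r k t = (j == k)%:R * profile r k t ^+ 2.
Proof.
have [->|jk] := eqVneq j k; first by rewrite mul1r expr2.
have [sj|/profile_eq0->] := boolP (profile_support r j t); last by rewrite !mul0r.
have [sk|/profile_eq0->] := boolP (profile_support r k t); last by rewrite mulr0 expr2 !mulr0.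
by have [jk' _] := profile_support_sep sj sk (leq_addr _ _) (leq_addr _ _); rewrite jk' eqxx in jk.
Qed.

End Profile.

(** * The Knill-Laflamme conditions *)

Section Span.

Variables (n K : nat) (w : 'I_K -> qstate n).

Lemma inner_eq (phi phi' psi psi' : qstate n) :
  phi =1 phi' -> psi =1 psi' -> inner phi psi = inner phi' psi'.
Proof. by move=> E1 E2; apply: eq_bigr => x _; rewrite E1 E2. Qed.

Lemma apply_op_eq (A : qop n) (psi psi' : qstate n) :
  psi =1 psi' -> apply_op A psi =1 apply_op A psi'.
Proof. by move=> E y; apply: eq_bigr => x _; rewrite E. Qed.

Lemma apply_comb (A : qop n) b y :
  apply_op A (comb w b) y = \sum_k b k * apply_op A (w k) y.
Proof.
rewrite /apply_op /comb; under eq_bigr do rewrite mulr_sumr.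
rewrite exchange_big /=; apply: eq_bigr => k _; rewrite mulr_sumr.
by apply: eq_bigr => x _; rewrite mulrCA.
Qed.

Lemma inner_comb a (f : 'I_K -> qstate n) b :
  inner (comb w a) (fun y => \sum_k b k * f k y) =
  \sum_j \sum_k (a j)^* * b k * inner (w j) (f k).
Proof.
rewrite /inner /comb; under eq_bigr do rewrite rmorph_sum mulr_suml.
rewrite exchange_big /=; apply: eq_bigr => j _; under eq_bigr do rewrite mulr_sumr.
rewrite exchange_big /=; apply: eq_bigr => k _; rewrite mulr_sumr.
by apply: eq_bigr => x _; rewrite rmorphM /=; ring.
Qed.

Lemma in_span_inner_op (A : qop n) c :
  (forall j k, inner (w j) (w k) = (j == k)%:R) ->
  (forall j k, inner (w j) (apply_op A (w k)) = (j == k)%:R * c) ->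
  forall phi psi, in_span w phi -> in_span w psi -> inner phi (apply_op A psi) = c * inner phi psi.
Proof.
move=> wON wA phi psi [a phiE] [b psiE].
rewrite (inner_eq (psi' := fun y => \sum_k b k * w k y) phiE psiE).
rewrite (inner_eq (psi' := fun y => \sum_k b k * apply_op A (w k) y) phiE); last first.
  by move=> y; rewrite (apply_op_eq A psiE) apply_comb.
rewrite !inner_comb mulr_sumr; apply: eq_bigr => j _; rewrite mulr_sumr.
by apply: eq_bigr => k _; rewrite wA wON; ring.
Qed.

Lemma inner_sumr (phi : qstate n) (f : 'I_K -> qstate n) b :
  inner phi (fun y => \sum_k b k * f k y) = \sum_k b k * inner phi (f k).
Proof.
rewrite /inner; under eq_bigr do rewrite mulr_sumr.
by rewrite exchange_big; apply: eq_bigr => k _; rewrite mulr_sumr; apply: eq_bigr => x _; ring.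
Qed.

End Span.



(* The weight distributions of the two codewords have the same total mass, mean and second
   factorial moment, which is all that [pair_mean] sees. *)
Lemma pair_mean_balance m G : (3 <= m)%N ->
  (m - 3)%:R * pair_mean (m + 3) 0 G + (m + 3)%:R * pair_mean (m + 3) m G =
  (m + 3)%:R * pair_mean (m + 3) 3 G + (m - 3)%:R * pair_mean (m + 3) (m + 3) G.
Proof.
move=> m3; have [K ->] : exists K, m = (K + 3)%N by exists (m - 3)%N; lia.
rewrite /pair_mean.
have -> : (K + 3 - 3 = K)%N by lia.
have -> : ((K + 3).-1 = K + 2)%N by lia.
have -> : ((K + 3 + 3).-1 = K + 5)%N by lia.
rewrite !natrM !natrD /=.
by field; rewrite -!natrD !pnatr_eq0 !addn_eq0 !andbF.
Qed.

Definition code_pair_mean r (G : bool -> bool -> algC) : algC :=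
  (2 ^ r - 3)%:R / (2 ^ r.+1)%:R * pair_mean (2 ^ r + 3) 0 G
  + (2 ^ r + 3)%:R / (2 ^ r.+1)%:R * pair_mean (2 ^ r + 3) (2 ^ r) G.

Lemma sum_sqr_profile_pair r k (i j : 'I_(2 ^ r + 3)) G : (3 <= r)%N -> i != j ->
  \sum_(x : qbasis (2 ^ r + 3)) profile r k (hweight x) ^+ 2 * G (x i) (x j) =
  code_pair_mean r G.
Proof.
move=> r3 ij; have h8 := exp2_ge8 r3.
have m0 : (0 != 2 ^ r)%N by lia.
have m3 : (3 != 2 ^ r + 3)%N by lia.
rewrite /profile /code_pair_mean; case: ifP => _;
  rewrite sum_sqr_dicke_pair ?leq_addr ?leq_addl //.
rewrite ![_ / _ * _]mulrAC -!mulrDl pair_mean_balance; last lia.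
by rewrite addrC.
Qed.

Lemma code_pair_mean1 r : (3 <= r)%N -> code_pair_mean r (fun _ _ => 1) = 1.
Proof.
move=> r3; have h8 := exp2_ge8 r3.
have pm1 t : pair_mean (2 ^ r + 3) t (fun _ _ => 1) = 1 by rewrite /pair_mean; ring.
rewrite /code_pair_mean !pm1 !mulr1 -mulrDl -natrD.
have -> : (2 ^ r - 3 + (2 ^ r + 3) = 2 ^ r.+1)%N by rewrite expnS; lia.
by rewrite divff // pnatr_eq0 expn_eq0.
Qed.

Definition pair_kernel n (p : 'I_n -> 'I_4) i j (b1 b2 : bool) : algC :=
  ((b1 + b2 == (b1 (+) pauli_flip (p i)) + (b2 (+) pauli_flip (p j)))%N)%:R
  * (pauli_phase (p i) b1 * pauli_phase (p j) b2).

(* A Pauli acting on two sites changes the weight by at most 2, while distinct points of the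
   codeword supports are at least 3 apart. *)
Lemma codeword_pauli_term r (p : 'I_(2 ^ r + 3) -> 'I_4) i j (j' k : 'I_2) x :
  (3 <= r)%N -> i != j -> (forall l, l != i -> l != j -> p l = ord0) ->
  (codewords r j' (xorv (pauli_flips p) x))^* * pauli_phases p x * codewords r k x =
  (j' == k)%:R * (profile r k (hweight x) ^+ 2 * pair_kernel p i j (x i) (x j)).
Proof.
move=> r3 ij pij; rewrite !codewordsE profile_conj // (pauli_phases_pair _ ij pij) /pair_kernel.
set y := xorv (pauli_flips p) x.
have yi : y i = x i (+) pauli_flip (p i) by rewrite !ffunE.
have yj : y j = x j (+) pauli_flip (p j) by rewrite !ffunE.
have yx : (hweight y + x i + x j = hweight x + y i + y j)%N.
  by apply: hweight_agree => // l li lj; rewrite !ffunE pij // addbF.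
rewrite -yi -yj; have := leq_b1 (x i); have := leq_b1 (x j).
have := leq_b1 (y i); have := leq_b1 (y j) => b1 b2 b3 b4.
have [E|E] := eqVneq (hweight y) (hweight x).
  rewrite (_ : (x i + x j == y i + y j)%N); last by apply/eqP; lia.
  by rewrite E mul1r mulrAC profile_mul //; ring.
rewrite (_ : (x i + x j == y i + y j)%N = false); last by apply/negbTE/eqP; lia.
rewrite mul0r !mulr0.
have [sy|/profile_eq0->] := boolP (profile_support r j' (hweight y)); last by rewrite !mul0r.
have [sx|/profile_eq0->] := boolP (profile_support r k (hweight x)); last by rewrite mulr0.
have yx2 : (hweight y <= hweight x + 2)%N by lia.
have xy2 : (hweight x <= hweight y + 2)%N by lia.
by have [_ /eqP] := profile_support_sep r3 sy sx yx2 xy2; rewrite (negbTE E).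
Qed.

Lemma codeword_pauli_inner r (p : 'I_(2 ^ r + 3) -> 'I_4) : (3 <= r)%N -> (pweight p < 3)%N ->
  exists c, forall j' k : 'I_2,
    inner (codewords r j') (apply_op (pauli_op p) (codewords r k)) = (j' == k)%:R * c.
Proof.
move=> r3 pw; have [i [j [ij pij]]] := pauli_support_pair (ltn_addl _ (isT : 1 < 3)%N) pw.
exists (code_pair_mean r (pair_kernel p i j)) => j' k; rewrite inner_pauliE.
under eq_bigr do rewrite (codeword_pauli_term _ _ _ r3 ij pij).
by rewrite -mulr_sumr sum_sqr_profile_pair.
Qed.

Lemma codewords_orthonormal r (j k : 'I_2) : (3 <= r)%N ->
  inner (codewords r j) (codewords r k) = (j == k)%:R.
Proof.
move=> r3; pose i0 : 'I_(2 ^ r + 3) := Ordinal (ltn_addl _ (isT : 0 < 3)%N).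
pose i1 : 'I_(2 ^ r + 3) := Ordinal (ltn_addl _ (isT : 1 < 3)%N).
rewrite /inner; under eq_bigr do rewrite !codewordsE profile_conj // profile_mul // -[_ ^+ 2]mulr1.
by rewrite -mulr_sumr (@sum_sqr_profile_pair r k i0 i1 (fun _ _ => 1)) // code_pair_mean1 ?mulr1.
Qed.

Lemma is_code_codewords r : (3 <= r)%N -> is_code 3 (codewords r).
Proof.
move=> r3; split=> [j k|p pw]; first exact: codewords_orthonormal.
have [c Hc] := codeword_pauli_inner r3 pw; exists c.
by apply: in_span_inner_op => // j k; apply: codewords_orthonormal.
Qed.

(** * Permutation invariance and non-additivity *)

Lemma perm_invariant_codewords r : perm_invariant (codewords r).
Proof.
move=> psi [a psiE] s x; rewrite !psiE /comb; apply: eq_bigr => k _.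
by rewrite !codewordsE hweight_perm.
Qed.

Lemma triple_products_one (T : eqType) (s : T -> algC) (i0 i1 i2 i3 : T) :
  [/\ i0 != i1, i0 != i2, i0 != i3 & [/\ i1 != i2, i1 != i3 & i2 != i3]] ->
  (forall u v w, u != v -> u != w -> v != w -> s u * s v * s w = 1) ->
  s i2 ^+ 2 = 1 -> s i0 = 1.
Proof.
move=> [d01 d02 d03 [d12 d13 d23]] s3 s2.
have t1 := s3 _ _ _ d01 d02 d12; have t2 := s3 _ _ _ d01 d03 d13.
have s01 : s i0 * s i1 != 0 by apply: contra_eq_neq t1 => ->; rewrite mul0r eq_sym oner_neq0.
have e23 : s i2 = s i3 by apply: (mulfI s01); rewrite t1 t2.
by rewrite -(s3 _ _ _ d02 d03 d23) -e23 -mulrA -expr2 s2 mulr1.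
Qed.

Section StabilizingPauli.

Variables (r k : nat) (A : qop (2 ^ r + 3)) (p : 'I_(2 ^ r + 3) -> 'I_4).
Hypothesis r3 : (3 <= r)%N.
Hypothesis AE : forall y x, A y x = 'i ^+ k * pauli_op p y x.
Hypothesis A_fix : forall (j : 'I_2) y, apply_op A (codewords r j) y = codewords r j y.

Let a := pauli_flips p.

Lemma stab_codewordE j y :
  'i ^+ k * (pauli_phases p (xorv a y) * codewords r j (xorv a y)) = codewords r j y.
Proof. by rewrite -(apply_scaled_pauliE _ _ AE) A_fix. Qed.

Lemma stab_support j y : profile_support r j (hweight y) ->
  profile_support r j (hweight (xorv a y)).
Proof.
move=> /(profile_neq0 r3); rewrite -codewordsE -stab_codewordE !mulf_eq0 negb_or => /andP[_].
rewrite negb_or => /andP[_]; rewrite codewordsE; apply: contraR => /profile_eq0->.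
by rewrite eqxx.
Qed.

Lemma stab_no_flips l : a l = false.
Proof.
have h8 := exp2_ge8 r3; pose z := indicator (set0 : {set 'I_(2 ^ r + 3)}).
have za : xorv a z = a by apply/ffunP => i; rewrite !ffunE inE.
have := @stab_support ord0 z; rewrite za hweight_indicator cards0 /profile_support /=.
case/(_ isT)/orP => /eqP aw.
  by move: aw; rewrite hweightE => /card0_eq/(_ l); rewrite !inE.
have [B] : exists B, B \in [set B : {set 'I_(2 ^ r + 3)} | B \subset [set l | a l] & #|B| == 3%N].
  by apply/card_gt0P; rewrite cards_draws bin_gt0 -hweightE aw; lia.
rewrite inE => /andP[sB /eqP B3].
have := @stab_support (Ordinal (isT : 1 < 2)%N) (indicator B).
rewrite hweight_indicator B3 /profile_support /= => /(_ isT).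
have -> : hweight (xorv a (indicator B)) = (2 ^ r - 3)%N.
  rewrite hweightE (_ : [set l | xorv a (indicator B) l] = [set l | a l] :\: B).
    by rewrite cardsDS // B3 -hweightE aw.
  apply/setP => i; rewrite !inE !ffunE; case: (boolP (i \in B)) => iB //=.
  by have := subsetP sB i iB; rewrite inE /a ffunE => ->.
by move/orP => [] /eqP; lia.
Qed.

Lemma stab_no_flipsE y : xorv a y = y.
Proof. by apply/ffunP => l; rewrite ffunE stab_no_flips addbF. Qed.

Lemma stab_codeword_diagE j y : 'i ^+ k * pauli_phases p y * codewords r j y = codewords r j y.
Proof. by rewrite -mulrA -{2}(stab_codewordE j y) stab_no_flipsE. Qed.

Lemma stab_phases_on_support j y : profile_support r j (hweight y) -> 'i ^+ k * pauli_phases p y = 1.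
Proof.
move=> /(profile_neq0 r3); rewrite -codewordsE => cw0.
by apply: (mulIf cw0); rewrite stab_codeword_diagE mul1r.
Qed.

Lemma stab_scalar : 'i ^+ k = 1 :> algC.
Proof.
have := @stab_phases_on_support ord0 (indicator set0); rewrite hweight_indicator cards0 => /(_ isT).
rewrite /pauli_phases big1 ?mulr1 // => l _.
by rewrite ffunE inE pauli_phase_false // -(ffunE (fun l => pauli_flip (p l))) stab_no_flips.
Qed.

Lemma stab_no_phase_flips l : ~~ pauli_flip (p l).
Proof. by have := stab_no_flips l; rewrite ffunE => ->. Qed.

Lemma stab_phase_triples u v w : u != v -> u != w -> v != w ->
  pauli_phase (p u) true * pauli_phase (p v) true * pauli_phase (p w) true = 1.
Proof.
move=> uv uw vw; have uvw : [set u; v; w] = u |: (v |: [set w]).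
  by apply/setP => l; rewrite !inE orbA.
have card3 : #|[set u; v; w]| = 3%N by rewrite uvw !cardsU1 !inE cards1 negb_or uv uw vw.
have := @stab_phases_on_support (Ordinal (isT : 1 < 2)%N) (indicator [set u; v; w]).
rewrite hweight_indicator card3 stab_scalar mul1r => /(_ isT) <-.
rewrite /pauli_phases [RHS](bigID (mem [set u; v; w])) /= [X in _ = _ * X]big1 ?mulr1; last first.
  by move=> l /negbTE lB; rewrite ffunE lB pauli_phase_false ?stab_no_phase_flips.
rewrite uvw !big_setU1 ?big_set1 /= ?inE ?negb_or ?uv ?uw ?vw //= !ffunE !inE !eqxx ?orbT.
by rewrite mulrA.
Qed.

Lemma stab_fixes_weight1 (i0 i1 i2 i3 : 'I_(2 ^ r + 3)) y :
  [/\ i0 != i1, i0 != i2, i0 != i3 & [/\ i1 != i2, i1 != i3 & i2 != i3]] ->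
  apply_op A (fun y => (y == indicator [set i0])%:R) y = (y == indicator [set i0])%:R.
Proof.
move=> dist; have s0 : pauli_phase (p i0) true = 1.
  by apply: (triple_products_one dist stab_phase_triples); rewrite sqr_pauli_phase ?stab_no_phase_flips.
rewrite (apply_scaled_pauliE _ _ AE) stab_no_flipsE stab_scalar mul1r.
case: eqP => [->|_]; last by rewrite mulr0.
rewrite mulr1 /pauli_phases (bigD1 i0) //= big1 ?mulr1 ?ffunE ?inE ?eqxx //.
by move=> l li0; rewrite ffunE inE (negbTE li0) pauli_phase_false ?stab_no_phase_flips.
Qed.

End StabilizingPauli.

Lemma in_span_codewords r (j : 'I_2) : in_span (codewords r) (codewords r j).
Proof.
exists (fun k => (k == j)%:R) => x; rewrite /comb (bigD1 j) //= eqxx mul1r big1 ?addr0 //.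
by move=> k /negbTE->; rewrite mul0r.
Qed.

Lemma non_additive_codewords r : (3 <= r)%N -> non_additive (codewords r).
Proof.
move=> r3 [S [[S_pauli _ _ _ _] S_code]]; have h8 := exp2_ge8 r3.
have i3 : (3 < 2 ^ r + 3)%N by lia.
pose i0 : 'I_(2 ^ r + 3) := Ordinal (ltn_trans (isT : 0 < 3)%N i3).
pose i1 : 'I_(2 ^ r + 3) := Ordinal (ltn_trans (isT : 1 < 3)%N i3).
pose i2 : 'I_(2 ^ r + 3) := Ordinal (ltn_trans (isT : 2 < 3)%N i3).
have /S_code[a aE] : (forall B, S B -> forall y, apply_op B (fun y => (y == indicator [set i0])%:R) y
    = (y == indicator [set i0])%:R).
  move=> B SB y; have [k [p BE]] := S_pauli B SB.
  have B_fix j : apply_op B (codewords r j) =1 codewords r j.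
    exact: (S_code _).1 (in_span_codewords r j) B SB.
  by apply: (@stab_fixes_weight1 r k B p r3 BE B_fix i0 i1 i2 (Ordinal i3)).
have := aE (indicator [set i0]); rewrite eqxx /comb big1 => [/eqP|k _]; first by rewrite oner_eq0.
rewrite codewordsE hweight_indicator cards1 profile_eq0 ?mulr0 //.
by rewrite /profile_support; case: ifP => _; apply/negP => /orP[] /eqP; lia.
Qed.

Lemma mx2_mul (a b c d a' b' c' d' : algC) :
  mx2 a b c d *m mx2 a' b' c' d' =
  mx2 (a * a' + b * c') (a * b' + b * d') (c * a' + d * c') (c * b' + d * d').
Proof.
apply/matrixP => i j; rewrite !mxE big_ord_recr big_ord1 /= !mxE.
by case: i => [[|[|//]] ?]; case: j => [[|[|//]] ?].
Qed.

Lemma ord2P (j : 'I_2) : j = ord0 \/ j = ord_max.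
Proof. by case: j => [[|[|//]] ?]; [left | right]; apply: val_inj. Qed.

Lemma sum_ord2 (F : 'I_2 -> algC) : \sum_(l < 2) F l = F ord0 + F ord_max.
Proof. by rewrite big_ord_recr big_ord1; congr (F _ + _); apply: val_inj. Qed.

Lemma mx2_1 : (1%:M : 'M[algC]_2) = mx2 1 0 0 1.
Proof.
by apply/matrixP => i j; rewrite !mxE; case: i => [[|[|//]] ?]; case: j => [[|[|//]] ?].
Qed.

Lemma tr_mx2 (a b c d : algC) : (mx2 a b c d)^T = mx2 a c b d.
Proof.
by apply/matrixP => i j; rewrite !mxE; case: i => [[|[|//]] ?]; case: j => [[|[|//]] ?].
Qed.

Lemma mx2_inj (a b c d a' b' c' d' : algC) :
  mx2 a b c d = mx2 a' b' c' d' -> [/\ a = a', b = b', c = c' & d = d'].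
Proof.
move=> E; have e i j : mx2 a b c d i j = mx2 a' b' c' d' i j by rewrite E.
have := e ord0 ord0; have := e ord0 ord_max; have := e ord_max ord0; have := e ord_max ord_max.
by rewrite !mxE /=.
Qed.

Lemma mx2_bitE (a b c d : algC) u v :
  mx2 a b c d (bitidx u) (bitidx v) = if u then (if v then d else c) else (if v then b else a).
Proof. by rewrite mxE; case: u; case: v. Qed.

Lemma mx2_unit (a b c d : algC) : a * d - b * c != 0 -> mx2 a b c d \in unitmx.
Proof.
move=> det0; rewrite unitmxE unitfE (expand_det_row _ ord0) big_ord_recr big_ord1 /=.
rewrite /cofactor !det_mx11 !mxE /= expr0 expr1 !mul1r.
by rewrite mulN1r mulrN.
Qed.

Definition rv2 (x y : algC) : 'rV[algC]_2 := \row_j (if val j == 0%N then x else y).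

Lemma rv2_mul x y a b c d : rv2 x y *m mx2 a b c d = rv2 (x * a + y * c) (x * b + y * d).
Proof.
apply/matrixP => i j; rewrite !mxE big_ord_recr big_ord1 /= !mxE.
by case: j => [[|[|//]] ?].
Qed.

Lemma rv2_eta (v : 'rV[algC]_2) : v = rv2 (v ord0 ord0) (v ord0 ord_max).
Proof.
apply/matrixP => i j; rewrite !mxE (ord1 i).
by case: j => [[|[|//]] ?] /=; congr (v _ _); apply: val_inj.
Qed.

Lemma scale_rv2 s x y : s *: rv2 x y = rv2 (s * x) (s * y).
Proof. by apply/matrixP => i j; rewrite !mxE; case: ifP. Qed.

Lemma add_rv2 x y x' y' : rv2 x y + rv2 x' y' = rv2 (x + x') (y + y').
Proof. by apply/matrixP => i j; rewrite !mxE; case: ifP. Qed.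

Lemma stablemx_row (U M : 'M[algC]_2) (v : 'rV_2) :
  stablemx U M -> (v <= U)%MS -> (v *m M <= U)%MS.
Proof. by move=> UM vU; apply: submx_trans UM; apply: submxMr. Qed.

Lemma antidiag_stable_swap (c : algC) (U : 'M_2) x y : c != 0 ->
  stablemx U (mx2 0 c c 0) -> (rv2 x y <= U)%MS -> (rv2 y x <= U)%MS.
Proof.
move=> c0 UX /(stablemx_row UX); rewrite rv2_mul !(mulr0, add0r, addr0).
rewrite (_ : rv2 (y * c) (x * c) = c *: rv2 y x); last by rewrite scale_rv2 ![c * _]mulrC.
by rewrite (eqmx_scale _ c0).
Qed.

Lemma diag_stable_axis (a b : algC) (U : 'M_2) (v : 'rV_2) : a != b ->
  stablemx U (mx2 a 0 0 b) -> (v <= U)%MS -> v != 0 ->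
  (rv2 1 0 <= U)%MS \/ (rv2 0 1 <= U)%MS.
Proof.
move=> ab UD vU; rewrite [v]rv2_eta in vU *; set x := v _ _; set y := v _ _ => v0.
have comb s t : ((s *: (rv2 x y *m mx2 a 0 0 b) + t *: rv2 x y)%R <= U)%MS.
  by apply: addmx_sub; apply: scalemx_sub; rewrite ?(stablemx_row UD).
have [x0|x0] := eqVneq x 0.
  have y0 : y != 0 by apply: contra v0 => /eqP y0; rewrite x0 y0; apply/eqP/matrixP => i j; rewrite !mxE; case: ifP.
  right; have := comb (y * (b - a))^-1 (- (y * (b - a))^-1 * a).
  rewrite rv2_mul !scale_rv2 add_rv2 x0; congr (rv2 _ _ <= U)%MS; first by ring.
  by field; rewrite subr_eq0 eq_sym ab y0.
left; have := comb (x * (a - b))^-1 (- (x * (a - b))^-1 * b).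
rewrite rv2_mul !scale_rv2 add_rv2; congr (rv2 _ _ <= U)%MS; last by ring.
by field; rewrite subr_eq0 ab x0.
Qed.

Lemma row_mx2_1 (k : 'I_2) : row k (1%:M : 'M[algC]_2) = if val k == 0%N then rv2 1 0 else rv2 0 1.
Proof.
apply/matrixP => i j; rewrite !mxE.
by case: k => [[|[|//]] ?]; case: j => [[|[|//]] ?]; rewrite !mxE.
Qed.

Lemma mx2_irreducible (a b c : algC) (U : 'M_2) : a != b -> c != 0 ->
  stablemx U (mx2 a 0 0 b) -> stablemx U (mx2 0 c c 0) -> U = 0 \/ row_full U.
Proof.
move=> ab c0 UD UX; have [->|/eqP U0] := eqVneq U 0; [by left | right].
have [i vi] : exists i, row i U != 0.
  apply/existsP; rewrite -negb_forall; apply: contra_notN U0 => /forallP U0.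
  by apply/row_matrixP => i; rewrite row0; apply/eqP.
have [e0 e1] : (rv2 1 0 <= U)%MS /\ (rv2 0 1 <= U)%MS.
  by case: (diag_stable_axis ab UD (row_sub i U) vi) => e; split=> //;
    apply: antidiag_stable_swap c0 UX e.
by rewrite -sub1mx; apply/row_subP => k; rewrite row_mx2_1; case: ifP.
Qed.

(** * Tensor powers of single-qubit gates *)

Lemma sum_bitidx (F : 'I_2 -> algC) : \sum_(c < 2) F c = \sum_(b : bool) F (bitidx b).
Proof.
rewrite big_ord_recr big_ord1 big_bool /= addrC; congr (_ + _); congr F; exact: val_inj.
Qed.

Lemma tpow_mulE n (g h : 'M[algC]_2) (psi : qstate n) y :
  apply_op (@tpow n (g *m h)) psi y = apply_op (@tpow n g) (apply_op (@tpow n h) psi) y.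
Proof.
rewrite /apply_op /tpow /tensor.
have E (x : qbasis n) : \prod_(i < n) (g *m h) (bitidx (y i)) (bitidx (x i)) =
    \sum_(z : qbasis n) (\prod_(i < n) g (bitidx (y i)) (bitidx (z i))) *
                        (\prod_(i < n) h (bitidx (z i)) (bitidx (x i))).
  under eq_bigr do rewrite mxE sum_bitidx.
  by rewrite bigA_distr_bigA /=; apply: eq_bigr => z _; rewrite -big_split.
under eq_bigr do rewrite E mulr_suml.
rewrite exchange_big /=; apply: eq_bigr => z _; rewrite mulr_sumr.
by apply: eq_bigr => x _; rewrite mulrA.
Qed.

Lemma prod_bits n (y : qbasis n) (a b : algC) :
  \prod_(i < n) (if y i then b else a) = a ^+ (n - hweight y) * b ^+ hweight y.
Proof.
rewrite (bigID (fun i => y i)) /= (eq_bigr (fun _ => b)); last by move=> i ->.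
rewrite [X in _ * X](eq_bigr (fun _ => a)); last by move=> i /negbTE ->.
rewrite !prodr_const mulrC; congr (_ ^+ _ * _ ^+ _).
have := hweightC y; rewrite (eq_card (B := [pred i | ~~ y i])) //; lia.
Qed.

Definition negv n (y : qbasis n) : qbasis n := [ffun i => ~~ y i].

Lemma hweight_negv n (y : qbasis n) : hweight (negv y) = (n - hweight y)%N.
Proof.
have -> : hweight (negv y) = #|[pred i | ~~ y i]| by apply: eq_card => i; rewrite !inE ffunE.
by have := hweightC y; lia.
Qed.

Lemma tpow_diagE n (a b : algC) (psi : qstate n) y :
  apply_op (@tpow n (mx2 a 0 0 b)) psi y = a ^+ (n - hweight y) * b ^+ hweight y * psi y.
Proof.
rewrite /apply_op (bigD1 y) //= big1 ?addr0.
  rewrite /tpow /tensor -prod_bits; congr (_ * _); apply: eq_bigr => i _.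
  by rewrite mx2_bitE; case: (y i).
move=> x /ffun_neqP[i xy]; rewrite /tpow /tensor (bigD1 i) //= mx2_bitE.
by move: xy; case: (y i); case: (x i); rewrite ?mul0r.
Qed.

Lemma tpow_antidiagE n (c : algC) (psi : qstate n) y :
  apply_op (@tpow n (mx2 0 c c 0)) psi y = c ^+ n * psi (negv y).
Proof.
rewrite /apply_op (bigD1 (negv y)) //= big1 ?addr0.
  rewrite /tpow /tensor (eq_bigr (fun _ => c)) ?prodr_const ?card_ord //.
  by move=> i _; rewrite mx2_bitE ffunE; case: (y i).
move=> x /ffun_neqP[i xy]; rewrite /tpow /tensor (bigD1 i) //= mx2_bitE.
by move: xy; rewrite ffunE; case: (y i); case: (x i); rewrite ?mul0r.
Qed.

(** * The generalized quaternion group *)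

Lemma expr1_coprime (R : pzRingType) (x : R) n m : (0 < n)%N -> coprime n m ->
  x ^+ n = 1 -> x ^+ m = 1 -> x = 1.
Proof.
move=> n0 nm xn xm; have [u v E _] := egcdnP m n0; rewrite (eqP nm) in E.
have : x ^+ (u * n) = x ^+ (v * m + 1) by rewrite E.
by rewrite mulnC exprM xn expr1n exprD mulnC exprM xm expr1n mul1r expr1.
Qed.

Section Quaternion.

Variable r : nat.

Definition zeta : algC := (2 ^ r)%N.-root (-1).
Definition phase_mx (k : nat) : 'M[algC]_2 := mx2 (zeta^-1 ^+ k) 0 0 (zeta ^+ k).

Lemma zeta_exp2 : zeta ^+ (2 ^ r) = -1.
Proof. by rewrite /zeta rootCK // expn_gt0. Qed.

Lemma zeta_exp2S : zeta ^+ (2 ^ r.+1) = 1.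
Proof. by rewrite expnS mulnC exprM zeta_exp2 sqrrN expr1n. Qed.

Lemma zeta_neq0 : zeta != 0.
Proof. by apply: contra_eq_neq zeta_exp2 => ->; rewrite expr0n expn_eq0 eq_sym oppr_eq0 oner_eq0. Qed.

Lemma zetaVK k : zeta^-1 ^+ k * zeta ^+ k = 1.
Proof. by rewrite -exprMn_comm ?mulVf ?expr1n ?zeta_neq0 //; apply: mulrC. Qed.

Lemma zetaV_exp k : zeta^-1 ^+ k = zeta ^+ (k * (2 ^ r.+1).-1).
Proof.
apply: (mulIf (expf_neq0 k zeta_neq0)); rewrite zetaVK -exprD -{2}[k]muln1 -mulnDr.
by rewrite addn1 prednK ?expn_gt0 // mulnC exprM zeta_exp2S expr1n.
Qed.

Lemma phase_mxD k l : phase_mx k *m phase_mx l = phase_mx (k + l).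
Proof. by rewrite /phase_mx mx2_mul !(mulr0, mul0r, addr0, add0r) !exprD. Qed.

Lemma phase_mx0 : phase_mx 0 = 1%:M.
Proof. by rewrite /phase_mx !expr0 mx2_1. Qed.

Lemma phase_mx_unit k : phase_mx k \in unitmx.
Proof. by apply: mx2_unit; rewrite !mulr0 subr0 zetaVK oner_neq0. Qed.

Lemma phase_mx_mul_antidiag k c : phase_mx k *m mx2 0 c c 0 =
  mx2 0 (zeta^-1 ^+ k * c) (zeta ^+ k * c) 0.
Proof. by rewrite /phase_mx mx2_mul !(mulr0, mul0r, addr0, add0r). Qed.

Lemma Xg_phase_mx l : Xg *m phase_mx l = phase_mx (l * (2 ^ r.+1).-1) *m Xg.
Proof.
have zetaVV : zeta^-1 ^+ (l * (2 ^ r.+1).-1) = zeta ^+ l.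
  by rewrite exprVn -zetaV_exp exprVn invrK.
rewrite /Xg /phase_mx !mx2_mul !(mulr0, mul0r, addr0, add0r) -zetaV_exp zetaVV.
by congr mx2; rewrite mulrC.
Qed.

Lemma Xg_sqr : Xg *m Xg = phase_mx (2 ^ r).
Proof.
rewrite /Xg /phase_mx mx2_mul !(mulr0, mul0r, addr0, add0r) exprVn zeta_exp2 invrN1.
by rewrite mulrNN mulCii.
Qed.

Lemma Zg_phase_mx : (1 <= r)%N -> exists k, Zg = phase_mx k.
Proof.
move=> r1; pose u := zeta ^+ (2 ^ r.-1).
have u2 : u ^+ 2 = -1 by rewrite /u -exprM -expnSr prednK // zeta_exp2.
have : (u - 'i) * (u + 'i) == 0 by rewrite -subr_sqr u2 sqrCi subrr.
rewrite mulf_eq0 subr_eq0 addr_eq0 => /orP[] /eqP ui.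
  by exists (2 ^ r.-1)%N; rewrite /phase_mx /Zg exprVn -/u ui invCi.
exists (3 * 2 ^ r.-1)%N; rewrite /phase_mx /Zg exprVn mulnC exprM -/u ui.
by rewrite exprS sqrrN sqrCi mulrN mulr1 opprK invCi.
Qed.

Lemma inQ_phase_mx k : inQ r (phase_mx k).
Proof.
elim: k => [|k IH]; first by rewrite phase_mx0; apply: inQ1.
by rewrite -addn1 -phase_mxD; apply: inQmul => //; rewrite /phase_mx !expr1; apply: inQPh.
Qed.

Lemma inQ_cases g : (1 <= r)%N -> inQ r g ->
  exists k, g = phase_mx k \/ g = phase_mx k *m Xg.
Proof.
move=> r1; elim => [| | | |g1 h1 _ [k [->|->]] _ [l [->|->]]].
- by exists 0%N; left; rewrite phase_mx0.
- by exists 0%N; right; rewrite phase_mx0 mul1mx.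
- by have [k ->] := Zg_phase_mx r1; exists k; left.
- by exists 1%N; left; rewrite /phase_mx !expr1.
- by exists (k + l)%N; left; rewrite phase_mxD.
- by exists (k + l)%N; right; rewrite mulmxA phase_mxD.
- by exists (k + l * (2 ^ r.+1).-1)%N; right; rewrite -mulmxA Xg_phase_mx mulmxA phase_mxD.
- exists (k + l * (2 ^ r.+1).-1 + 2 ^ r)%N; left.
  by rewrite -mulmxA (mulmxA Xg) Xg_phase_mx -mulmxA Xg_sqr !phase_mxD addnA.
Qed.

Lemma zeta_exp_cancel m k l : odd m ->
  zeta ^+ (k * m) = zeta ^+ (l * m) -> zeta ^+ k = zeta ^+ l.
Proof.
move=> m_odd E; pose rho := zeta ^+ k * zeta^-1 ^+ l.
have rho1 : rho = 1.
  apply: (@expr1_coprime _ _ m (2 ^ r.+1)); rewrite ?odd_gt0 ?coprimeXr ?coprimen2 //.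
    by rewrite /rho exprMn -!exprM E mulrC zetaVK.
  rewrite /rho exprMn -!exprM mulnC exprM zeta_exp2S expr1n mul1r.
  by rewrite mulnC exprM exprVn zeta_exp2S invr1 expr1n.
by rewrite -[RHS]mul1r -rho1 /rho -mulrA [_ * zeta ^+ l]zetaVK mulr1.
Qed.

Lemma zetaV_exp_neq m : (1 <= r)%N -> odd m -> zeta^-1 ^+ m != zeta ^+ m.
Proof.
move=> r1 m_odd; apply/eqP => E.
have z2 : zeta ^+ 2 = 1.
  apply: (@expr1_coprime _ _ m (2 ^ r)); rewrite ?odd_gt0 ?coprimeXr ?coprimen2 //.
    by rewrite -exprM mulnC exprM expr2 -{1}E zetaVK.
  by rewrite -exprM -expnS zeta_exp2S.
have := zeta_exp2; rewrite -(prednK r1) expnS exprM z2 expr1n => /eqP.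
by rewrite -subr_eq0 opprK -mulr2n pnatr_eq0.
Qed.

End Quaternion.

(** * The transversal action on the code *)

Lemma dicke_amp_compl n w t : (t <= n)%N -> (w <= n)%N ->
  dicke_amp n w (n - t)%N = dicke_amp n (n - w)%N t.
Proof.
move=> tn wn; rewrite /dicke_amp bin_sub //.
by have -> : (n - t == w)%N = (t == n - w)%N by apply/eqP/eqP; lia.
Qed.

Lemma dicke_pair_compl n s a b w1 w2 t : (t <= n)%N -> (w1 <= n)%N -> (w2 <= n)%N ->
  dicke_pair n s a b w1 w2 (n - t)%N = dicke_pair n s b a (n - w2)%N (n - w1)%N t.
Proof. by move=> tn w1n w2n; rewrite /dicke_pair !dicke_amp_compl // addrC. Qed.

Definition acts_on_codewords r (g M : 'M[algC]_2) := forall (j : 'I_2) y,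
  apply_op (@tpow (2 ^ r + 3) g) (codewords r j) y = \sum_(l < 2) M l j * codewords r l y.

Lemma mul_codeword_support r j y (c d : algC) :
  (profile_support r j (hweight y) -> c = d) -> c * codewords r j y = d * codewords r j y.
Proof.
rewrite codewordsE; have [/[swap]->//|/profile_eq0->] := boolP (profile_support r j _).
by rewrite !mulr0.
Qed.

Lemma acts_on_codewords_mul r g h M N :
  acts_on_codewords r g M -> acts_on_codewords r h N -> acts_on_codewords r (g *m h) (M *m N).
Proof.
move=> gM hN j y; rewrite tpow_mulE (apply_op_eq _ (hN j)).
rewrite (apply_comb (codewords r) _ (fun l => N l j)).
under eq_bigr do rewrite gM mulr_sumr.
rewrite exchange_big /=; apply: eq_bigr => l _; rewrite mxE mulr_suml.
by apply: eq_bigr => i _; rewrite mulrA [N i j * _]mulrC.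
Qed.

Section Action.

Variable r : nat.
Hypothesis r3 : (3 <= r)%N.

Lemma acts_on_codewords_phase k :
  acts_on_codewords r (phase_mx r k) (phase_mx r (k * (2 ^ r + 3))).
Proof.
have h8 := exp2_ge8 r3; move=> j y.
rewrite /phase_mx tpow_diagE sum_ord2 !mxE /= -!exprM.
have zm : (zeta r)^-1 ^+ (k * 2 ^ r) = zeta r ^+ (k * 2 ^ r).
  by rewrite mulnC !exprM exprVn zeta_exp2 invrN1.
have [->|->] := ord2P j; rewrite /= !(mul0r, addr0, add0r); apply: mul_codeword_support;
  rewrite /profile_support /= => /orP[]/eqP->; rewrite ?subn0 ?subnn ?muln0 ?expr0 ?mulr1 ?mul1r.
- by [].
- rewrite (_ : 2 ^ r + 3 - 2 ^ r = 3)%N; last lia.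
  by rewrite -zm -exprD mulnDr addnC.
- rewrite (_ : 2 ^ r + 3 - 3 = 2 ^ r)%N; last lia.
  by rewrite zm -exprD mulnDr.
- by [].
Qed.

Definition xlogical r : 'M[algC]_2 := mx2 0 ((- 'i) ^+ (2 ^ r + 3)) ((- 'i) ^+ (2 ^ r + 3)) 0.

Lemma acts_on_codewords_X : acts_on_codewords r Xg (xlogical r).
Proof.
have h8 := exp2_ge8 r3; move=> j y.
rewrite /Xg tpow_antidiagE sum_ord2 !mxE /= !codewordsE hweight_negv.
have yn := hweight_le y.
have [->|->] := ord2P j;
  rewrite /= !(mul0r, add0r, addr0) /profile /= dicke_pair_compl ?leq_addr ?leq_addl //.
  by rewrite subn0 (_ : 2 ^ r + 3 - 2 ^ r = 3)%N //; lia.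
by rewrite subnn (_ : 2 ^ r + 3 - 3 = 2 ^ r)%N //; lia.
Qed.

End Action.

Definition logical_mx r (g : 'M[algC]_2) : 'M[algC]_2 :=
  \matrix_(j, k) inner (codewords r j) (apply_op (@tpow (2 ^ r + 3) g) (codewords r k)).

Section Logical.

Variable r : nat.
Hypothesis r3 : (3 <= r)%N.

Lemma odd_length : odd (2 ^ r + 3).
Proof. by case: r r3 => // r' _; rewrite expnS oddD oddM. Qed.

Lemma logical_mx_acts g M : acts_on_codewords r g M -> logical_mx r g = M.
Proof.
move=> gM; apply/matrixP => j k; rewrite mxE (inner_eq (fun=> erefl) (gM k)) inner_sumr.
under eq_bigr do rewrite codewords_orthonormal //.
by rewrite (bigD1 j) //= eqxx mulr1 big1 ?addr0 // => l /negbTE; rewrite eq_sym => ->; rewrite mulr0.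
Qed.

Lemma logical_mx_cases g : inQ r g -> exists k,
  g = phase_mx r k /\ logical_mx r g = phase_mx r (k * (2 ^ r + 3))
  \/ g = phase_mx r k *m Xg /\ logical_mx r g = phase_mx r (k * (2 ^ r + 3)) *m xlogical r.
Proof.
move=> /(inQ_cases (ltnW (ltnW r3)))[k [->|->]]; exists k; [left | right]; split=> //.
  exact/logical_mx_acts/acts_on_codewords_phase.
exact/logical_mx_acts/acts_on_codewords_mul/acts_on_codewords_X/r3/acts_on_codewords_phase.
Qed.

Lemma acts_on_codewords_logical g : inQ r g -> acts_on_codewords r g (logical_mx r g).
Proof.
move=> /logical_mx_cases[k [[-> ->]|[-> ->]]]; first exact: acts_on_codewords_phase.
exact/acts_on_codewords_mul/acts_on_codewords_X/r3/acts_on_codewords_phase.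
Qed.

Lemma xlogical_coef_neq0 : (- 'i) ^+ (2 ^ r + 3) != 0 :> algC.
Proof. by rewrite expf_neq0 // oppr_eq0 neq0Ci. Qed.

Lemma logical_mx_inj g h : inQ r g -> inQ r h -> logical_mx r g = logical_mx r h -> g = h.
Proof.
have zVk_neq0 k : (zeta r)^-1 ^+ k != 0 by rewrite expf_neq0 // invr_eq0 zeta_neq0.
move=> /logical_mx_cases[k [[-> ->]|[-> ->]]] /logical_mx_cases[l [[-> ->]|[-> ->]]];
  rewrite /xlogical ?phase_mx_mul_antidiag /phase_mx => /mx2_inj[_ E1 E2 E3].
- by rewrite !exprVn (zeta_exp_cancel odd_length E3).
- by move/eqP: E1; rewrite eq_sym mulf_eq0 (negbTE (zVk_neq0 _)) (negbTE xlogical_coef_neq0).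
- by move/eqP: E1; rewrite mulf_eq0 (negbTE (zVk_neq0 _)) (negbTE xlogical_coef_neq0).
- by rewrite !exprVn (zeta_exp_cancel odd_length (mulIf xlogical_coef_neq0 E2)).
Qed.

Lemma logical_mx_irreducible (U : 'M[algC]_2) :
  (forall g, inQ r g -> stablemx U (logical_mx r g)^T) -> U = 0 \/ row_full U.
Proof.
move=> U_stable; apply: (mx2_irreducible (zetaV_exp_neq (ltnW (ltnW r3)) odd_length) xlogical_coef_neq0).
  have := U_stable _ (inQ_phase_mx r 1).
  by rewrite (logical_mx_acts (acts_on_codewords_phase r3 1)) /phase_mx tr_mx2 mul1n.
by have := U_stable _ (inQX r); rewrite (logical_mx_acts (acts_on_codewords_X r3)) /xlogical tr_mx2.
Qed.

Lemma G_transversal_codewords : G_transversal (codewords r) (inQ r).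
Proof.
exists (logical_mx r); split; last exact: acts_on_codewords_logical.
split=> [g /logical_mx_cases[k [[_ ->]|[_ ->]]] | g h gQ hQ | g h | ].
- exact: phase_mx_unit.
- by rewrite unitmx_mul phase_mx_unit mx2_unit // mul0r sub0r oppr_eq0 mulf_neq0 ?xlogical_coef_neq0.
- apply: logical_mx_acts; apply: acts_on_codewords_mul; exact: acts_on_codewords_logical.
- exact: logical_mx_inj.
- exact: logical_mx_irreducible.
Qed.

End Logical.

Theorem mainTheorem7 (r : nat) : (3 <= r)%N ->
  [/\ is_code 3 (codewords r),
      non_additive (codewords r),
      perm_invariant (codewords r)
    & G_transversal (codewords r) (inQ r)].
Proof.
move=> r3; split.
- exact: is_code_codewords.
- exact: non_additive_codewords.
- exact: perm_invariant_codewords.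
- exact: G_transversal_codewords.
Qed.
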